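(* Let $t,k,d,m,\ell$ be positive integers with $m\ge d$, and let $\mathbb{F}$ be a finite field. If $\Pi$ is a $t$-private $k$-server linear HSS for $\mathsf{POLY}_{d,m}(\mathbb{F})^\ell$, then $dt<k$ and the download cost of $\Pi$ is at least $k\ell\log_2|\mathbb{F}|/(k-dt)$. Consequently the download rate of $\Pi$ is at most $1-dt/k$.
   Context: $\mathsf{POLY}_{d,m}(\mathbb{F})$: polynomials in $\mathbb{F}[X_1,\dots,X_m]$ of total degree at most $d$. $\mathcal{F}^\ell$: the class of maps $(x_{i,r})_{i\in[m],r\in[\ell]}\mapsto(f_1(\mathbf{x}_1),\dots,f_\ell(\mathbf{x}_\ell))$, $\mathbf{x}_r=(x_{1,r},\dots,x_{m,r})$, $f_r\in\mathcal{F}$, where all $\ell m$ inputs are shared independently. A $k$-server HSS $(\mathsf{Share},\mathsf{Eval},\mathsf{Rec})$: randomized $\mathsf{Share}$ splits each input into $k$ input shares; server $j$ computes $y^{(j)}=\mathsf{Eval}(f,j,\text{its input shares})$; $\mathsf{Rec}(y^{(1)},\dots,y^{(k)})$ equals the function value with probability 1; $t$-private if for every set of at most $t$ servers the distribution of their input shares does not depend on the input. Linear HSS: $\mathcal{X}=\mathbb{F}$, $\mathsf{Share}(x,\mathbf{r})$ is $\mathbb{F}$-linear in $x$ and a uniformly random vector $\mathbf{r}$ over $\mathbb{F}$, $y^{(j)}\in\mathbb{F}^{b_j}$, and $\mathsf{Rec}$ is $\mathbb{F}$-linear ($\mathsf{Eval}$ arbitrary). Download cost $=\sum_j b_j\log_2|\mathbb{F}|$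 bits; download rate $=\ell\log_2|\mathbb{F}|/$download cost. *)

From HB Require Import structures.
From mathcomp Require Import all_boot all_order all_algebra all_field.
From mathcomp Require Import mpoly.
From mathcomp Require Import reals exp.
Set Implicit Arguments. Unset Strict Implicit. Unset Printing Implicit Defensive.
Import Order.TTheory GRing.Theory Num.Theory.
Local Open Scope ring_scope.

Definition POLY (F : finFieldType) (d m : nat) (p : mpoly.mpoly m F) : Prop :=
  forall mo, mo \in mpoly.msupp p -> (mpoly.mdeg mo <= d)%N.

(* Inputs of POLY_{d,m}(F)^l are indexed by (i, r) in [m] x [l]. *)
Definition input_idx (m l : nat) := ('I_m * 'I_l)%type.

(* A k-server linear HSS for POLY_{d,m}(F)^l.
   - Share(x, r) = (x *: shA j + r *m shB j)_{j < k}, F-linear in x and in the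
     uniformly random vector r in F^rho; server j's input share lies in F^(s j).
     The same Share is applied independently to each of the l*m inputs.
   - Eval f j (shares of server j) in F^(b j), arbitrary.
   - Rec (y^1..y^k) = \sum_j y^j *m rec j, F-linear, output in F^l. *)
Record linHSS (F : finFieldType) (k m l : nat) := LinHSS {
  rho : nat;
  shs : 'I_k -> nat;
  outb : 'I_k -> nat;
  shA : forall j : 'I_k, 'rV[F]_(shs j);
  shB : forall j : 'I_k, 'M[F]_(rho, shs j);
  ev : ('I_l -> mpoly.mpoly m F) -> forall j : 'I_k,
        (input_idx m l -> 'rV[F]_(shs j)) -> 'rV[F]_(outb j);
  rec : forall j : 'I_k, 'M[F]_(outb j, l)
}.
Arguments rho {F k m l} _.
Arguments shs {F k m l} _ _.
Arguments outb {F k m l} _ _.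
Arguments shA {F k m l} _ _.
Arguments shB {F k m l} _ _.
Arguments ev {F k m l} _ _ _ _.
Arguments rec {F k m l} _ _.

Section HSS.
Variables (F : finFieldType) (k m l : nat) (P : linHSS F k m l).

Definition share (j : 'I_k) (x : F) (r : 'rV[F]_(rho P)) : 'rV[F]_(shs P j) :=
  x *: shA P j + r *m shB _ _.

Definition rand_t := {ffun input_idx m l -> 'rV[F]_(rho P)}.

Definition reconstruct (f : 'I_l -> mpoly.mpoly m F)
    (x : input_idx m l -> F) (R : rand_t) : 'rV[F]_l :=
  \sum_(j < k) ev P f j (fun ir => share j (x ir) (R ir)) *m rec _ _.

(* Correctness with probability 1 (every randomness value has positive
   probability), for every function in POLY_{d,m}(F)^l and every input. *)
Definition hss_correct (d : nat) : Prop :=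
  forall (f : 'I_l -> mpoly.mpoly m F), (forall r, POLY d (f r)) ->
  forall (x : input_idx m l -> F) (R : rand_t),
    reconstruct f x R = \row_(r < l) mpoly.meval (fun i => x (i, r)) (f r).

(* Number of random choices producing view v for the servers in T:
   since R is uniform, this determines the distribution of the view. *)
Definition view_count (T : {set 'I_k}) (x : input_idx m l -> F)
    (v : forall j : 'I_k, input_idx m l -> 'rV[F]_(shs P j)) : nat :=
  #|[set R : rand_t | [forall j in T, forall ir, share j (x ir) (R ir) == v j ir]]|.

Definition hss_private (t : nat) : Prop :=
  forall T : {set 'I_k}, (#|T| <= t)%N ->
  forall x x' (v : forall j : 'I_k, input_idx m l -> 'rV[F]_(shs P j)),
    view_count T x v = view_count T x' v.

End HSS.

Definition log2 (R : realType) (x : R) : R := ln x / ln 2.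

Definition download_cost (R : realType) (F : finFieldType) k m l
    (P : linHSS F k m l) : R :=
  (\sum_(j < k) outb P j)%N%:R * log2 (#|F|%:R : R).

Definition download_rate (R : realType) (F : finFieldType) k m l
    (P : linHSS F k m l) : R :=
  (l%:R * log2 (#|F|%:R : R)) / download_cost R P.

From HB Require Import structures.
From mathcomp Require Import all_boot all_order all_algebra all_field.
From mathcomp Require mpoly.
From mathcomp Require Import reals exp.
From mathcomp Require Import zify ring lra.
From mathcomp Require boolp.
Import Order.TTheory GRing.Theory Num.Theory.
Local Open Scope ring_scope.
Set Implicit Arguments. Unset Strict Implicit.

(* Take the monomial X_0 ... X_(d-1) in every output coordinate, and assign each
   server either to one of these d variables, at most t servers per variable, or
   to nothing.  By t-privacy, for each variable i some randomness makes the input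
   share of the value 1 vanish at every server assigned to i.  Feeding the 0/1
   inputs supported on S, with that randomness, into output coordinate r, the
   signed sum over S of the outputs is +-e_r by inclusion-exclusion, while the
   terms of a server assigned to i do not depend on whether i is in S and cancel.
   So the reconstruction matrices of the unassigned servers span F^l and those
   servers download at least l symbols.  Averaging over the k cyclic shifts of an
   assignment of dt consecutive servers gives k l <= (k - dt) sum_j b_j; if
   dt >= k no server is left unassigned, which is absurd. *)

Lemma signed_sum_powerset_eq0 (R : pzRingType) (V : lmodType R) (I : finType)
    (D : {set I}) (i : I) (phi : {set I} -> V) :
  i \in D -> (forall S, phi S = phi (S :\ i)) ->
  \sum_(S in powerset D) (-1) ^+ #|S| *: phi S = 0.
Proof.
move=> iD phiD1.
rewrite (bigID (fun S : {set I} => i \in S)) /=; apply/eqP; rewrite addr_eq0.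
rewrite (reindex_onto (fun S => i |: S) (fun S => S :\ i)) /=; last first.
  by move=> S /andP[_ iS]; rewrite setD1K.
rewrite -sumrN; apply/eqP/eq_big => [S|S /andP[_ /eqP eS]].
  rewrite !powersetE subUset sub1set iD setU11 andbT.
  case: (boolP (i \in S)) => iS /=; last by rewrite setU1K ?eqxx ?andbT.
  by rewrite andbF; apply/negbTE/nandP; right; apply: contraTneq iS => <-; rewrite setD11.
have iS : i \notin S by rewrite -eS setD11.
by rewrite cardsU1 iS exprS mulN1r scaleNr phiD1 setU1K.
Qed.

Lemma signed_sum_powerset_supset (R : pzRingType) (V : lmodType R) (I : finType)
    (D : {set I}) (v : V) :
  \sum_(S in powerset D) (-1) ^+ #|S| *: ((D \subset S)%:R *: v) = (-1) ^+ #|D| *: v.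
Proof.
rewrite (bigD1 D) ?powersetE //= subxx scale1r big1 ?addr0 // => S /andP[SD SnD].
rewrite powersetE in SD; have [DS | _] := boolP (D \subset S); last by rewrite scale0r scaler0.
by rewrite eqEsubset SD DS in SnD.
Qed.

Lemma sumsmx_full_rows_ge (F : fieldType) (I : finType) (Q : pred I) n (b : I -> nat)
    (A : forall j, 'M[F]_(b j, n)) :
  ((1%:M : 'M[F]_n) <= \sum_(j | Q j) <<A j>>)%MS -> (n <= \sum_(j | Q j) b j)%N.
Proof.
move/mxrankS; rewrite mxrank1 => /leq_trans; apply.
apply: leq_trans (mxrank_sum_leqif _).1 _ => /=.
by apply: leq_sum => j _; rewrite genmxE rank_leq_row.
Qed.

Definition prefix_monom m d : mpoly.multinom m :=
  mpoly.Multinom [tuple ((i < d)%N : nat) | i < m].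

Lemma prefix_monomE m d (i : 'I_m) :
  mpoly.fun_of_multinom (prefix_monom m d) i = (i < d)%N.
Proof. by rewrite mpoly.multinomE tnth_mktuple. Qed.

Lemma mdeg_prefix_monom m d : (d <= m)%N -> mpoly.mdeg (prefix_monom m d) = d.
Proof.
move=> hdm; rewrite mpoly.mdegE.
under eq_bigr do rewrite prefix_monomE.
rewrite -(big_mkord predT (fun i => nat_of_bool (i < d)%N)) (@big_cat_nat _ _ _ d) //=.
rewrite [X in (_ + X)%N]big1_seq ?addn0; last first.
  by move=> i /andP[_]; rewrite mem_index_iota => /andP[/leq_gtF ->].
rewrite big_nat_cond (eq_bigr (fun _ => 1%N)) => [|i /andP[/andP[_ ->]]] //.
by rewrite -big_nat_cond sum_nat_const_nat subn0 muln1.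
Qed.

Lemma POLY_prefix_monom (F : finFieldType) m d :
  (d <= m)%N -> POLY d (mpoly.mpolyX F (prefix_monom m d)).
Proof.
by move=> hdm mo; rewrite mpoly.msuppX inE => /eqP ->; rewrite mdeg_prefix_monom.
Qed.

Lemma meval_prefix_monom (R : comNzRingType) m d (B : pred 'I_m) :
  mpoly.meval (fun i => (B i)%:R) (mpoly.mpolyX R (prefix_monom m d)) =
  [forall i : 'I_m, (i < d)%N ==> B i]%:R.
Proof.
rewrite mpoly.mevalX.
have [/forallP allB | /forallPn[i]] := boolP [forall i : 'I_m, (i < d)%N ==> B i].
  by apply: big1 => i _; rewrite prefix_monomE; have := allB i; case: (i < d)%N => //= ->.
rewrite negb_imply => /andP[id Bi].
by rewrite (bigD1 i) //= prefix_monomE id (negbTE Bi) expr1 mul0r.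
Qed.

Section LinearHSS.
Variables (F : finFieldType) (k m l : nat) (P : linHSS F k m l).

Lemma shareZ (j : 'I_k) (x : F) (r : 'rV_(rho P)) : share j x (x *: r) = x *: share j 1 r.
Proof. by rewrite /share -scalemxAl scale1r scalerDr. Qed.

Lemma hss_private_share_annihilator t (ir0 : input_idx m l) (T : {set 'I_k}) :
  hss_private P t -> (#|T| <= t)%N ->
  exists g : 'rV_(rho P), forall j, j \in T -> share j 1 g = 0.
Proof.
(* The all-zero view of T arises from the zero input with zero randomness, so by
   privacy also from the unit input at ir0; that randomness is the witness. *)
move=> Hpriv HT.
pose x ir : F := (ir == ir0)%:R.
pose v (j : 'I_k) (ir : input_idx m l) : 'rV[F]_(shs P j) := 0.
have : (0 < view_count T (fun _ => 0%R : F) v)%N.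
  apply/card_gt0P; exists [ffun => 0]; rewrite inE; apply/forall_inP => j _.
  by apply/forallP => ir; rewrite /share ffunE scale0r mul0mx addr0.
rewrite (Hpriv T HT _ x) => /card_gt0P[R]; rewrite inE => /forall_inP HR.
by exists (R ir0) => j /HR /forallP /(_ ir0) /eqP; rewrite /x eqxx.
Qed.

Definition unit_input (S : {set 'I_m}) (r0 : 'I_l) (ir : input_idx m l) : F :=
  ((ir.1 \in S) && (ir.2 == r0))%:R.

Lemma reconstruct_prefix_monom d (S : {set 'I_m}) r0 (R : rand_t P) :
  hss_correct P d -> (0 < d)%N -> (d <= m)%N ->
  reconstruct (fun _ => mpoly.mpolyX F (prefix_monom m d)) (unit_input S r0) R =
  ([set i : 'I_m | (i < d)%N] \subset S)%:R *: delta_mx 0 r0.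
Proof.
move=> Hcor hd hdm; rewrite Hcor => [|r]; last exact: POLY_prefix_monom.
apply/rowP => r; rewrite !mxE meval_prefix_monom mulr_natr.
have [-> | rr0] := eqVneq r r0; rewrite /= ?andbT ?andbF ?mulr1n ?mulr0n.
  congr (nat_of_bool _)%:R; apply/idP/idP => [/forallP DS | /subsetP DS].
    by apply/subsetP => i; rewrite inE => /(implyP (DS i)); rewrite andbT.
  by apply/forallP => i; apply/implyP => id; rewrite DS ?inE.
rewrite (_ : [forall _, _] = false) //; apply/negbTE/forallPn.
by exists (Ordinal (leq_trans hd hdm)); rewrite andbF implybF /= hd.
Qed.

End LinearHSS.

Section UnassignedServers.
Variables (F : finFieldType) (k m l d : nat) (P : linHSS F k m l).
Hypotheses (hd : (0 < d)%N) (hdm : (d <= m)%N) (Hcor : hss_correct P d).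
Variables (c : 'I_k -> option 'I_m) (g : 'I_m -> 'rV[F]_(rho P)).
Hypothesis c_lt_d : forall j i, c j = Some i -> (i < d)%N.
Hypothesis share_g : forall j i, c j = Some i -> share j 1 (g i) = 0.

Lemma delta_mx_sub_unassigned (r0 : 'I_l) :
  ((delta_mx 0 r0 : 'rV[F]_l) <= \sum_(j | c j == None) <<rec P j>>)%MS.
Proof.
pose D := [set i : 'I_m | (i < d)%N].
pose f (_ : 'I_l) := mpoly.mpolyX F (prefix_monom m d).
pose y j S := ev P f j (fun ir => unit_input F S r0 ir *: share j 1 (g ir.1)).
have reconE S : \sum_j y j S *m rec P j = (D \subset S)%:R *: delta_mx 0 r0.
  pose R := [ffun ir => unit_input F S r0 ir *: g ir.1].
  rewrite -(reconstruct_prefix_monom S r0 R Hcor hd hdm).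
  apply: eq_bigr => j _; congr (ev _ _ _ _ *m _); apply: boolp.funext => ir.
  by rewrite ffunE shareZ.
have assigned_eq0 j i : c j = Some i -> \sum_(S in powerset D) (-1) ^+ #|S| *: y j S = 0.
  move=> cj; apply: (signed_sum_powerset_eq0 (i := i)); first by rewrite inE (c_lt_d cj).
  move=> S; congr (ev _ _ _); apply: boolp.funext => ir.
  rewrite /unit_input; have [-> | ne] := eqVneq ir.1 i; first by rewrite share_g ?scaler0.
  by rewrite in_setD1 ne.
have signed_sumE : (-1) ^+ #|D| *: delta_mx 0 r0 =
    \sum_(j | c j == None) (\sum_(S in powerset D) (-1) ^+ #|S| *: y j S) *m rec P j.
  rewrite -signed_sum_powerset_supset.
  under eq_bigr do rewrite -reconE scaler_sumr.
  rewrite exchange_big (bigID (fun j => c j == None)) /= [X in _ + X]big1 ?addr0 => [|j].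
    by apply: eq_bigr => j _; rewrite mulmx_suml; apply: eq_bigr => S _; rewrite scalemxAl.
  case cj: (c j) => [i|] // _; under eq_bigr do rewrite scalemxAl.
  by rewrite -mulmx_suml (assigned_eq0 _ _ cj) mul0mx.
rewrite -[delta_mx 0 r0](signrZK #|D|) signed_sumE; apply/scalemx_sub/summx_sub => j cj.
by apply: (sumsmx_sup j) => //; rewrite genmxE submxMl.
Qed.

Lemma unassigned_outb_ge : (l <= \sum_(j | c j == None) outb P j)%N.
Proof.
apply: (sumsmx_full_rows_ge (A := rec P)); apply/row_subP => r; rewrite row1.
exact: delta_mx_sub_unassigned.
Qed.

End UnassignedServers.

Lemma hss_unassigned_outb_ge (F : finFieldType) k m l d t (P : linHSS F k m l)
    (c : 'I_k -> option 'I_m) :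
  (0 < d)%N -> (d <= m)%N -> (0 < l)%N -> hss_correct P d -> hss_private P t ->
  (forall j i, c j = Some i -> (i < d)%N) ->
  (forall i, #|[set j | c j == Some i]| <= t)%N ->
  (l <= \sum_(j | c j == None) outb P j)%N.
Proof.
move=> hd hdm hl Hcor Hpriv c_lt_d c_fibre.
have [g share_g] : exists g : 'I_m -> 'rV_(rho P),
    forall j i, c j = Some i -> share j 1 (g i) = 0.
  suff /fin_all_exists[g gP] : forall i, exists g : 'rV_(rho P),
      forall j, c j = Some i -> share j 1 g = 0 by exists g => j i /gP.
  move=> i; have [g gP] := hss_private_share_annihilator
    (Ordinal (leq_trans hd hdm), Ordinal hl) Hpriv (c_fibre i).
  by exists g => j cj; apply: gP; rewrite inE cj.
exact: (unassigned_outb_ge hd hdm Hcor c_lt_d share_g).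
Qed.

Section CyclicAssignment.
Local Open Scope nat_scope.
Variables (k m t d : nat).
Hypotheses (ht : 0 < t) (hdm : d <= m).

Definition cyclic_assign (s j : 'I_k) : option 'I_m :=
  if (j + s) %% k < d * t then insub ((j + s) %% k %/ t) else None.

Lemma cyclic_assign_SomeP s j i : cyclic_assign s j = Some i ->
  i = (j + s) %% k %/ t :> nat /\ (j + s) %% k < d * t.
Proof.
rewrite /cyclic_assign; case: ifP => // lt_dt.
case: insubP => [i' _ iE|] // [<-]; by rewrite -iE.
Qed.

Lemma cyclic_assign_lt s j i : cyclic_assign s j = Some i -> i < d.
Proof. by case/cyclic_assign_SomeP => ->; rewrite ltn_divLR. Qed.

Lemma cyclic_assign_None s j : (cyclic_assign s j == None) = (d * t <= (j + s) %% k).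
Proof.
rewrite /cyclic_assign; case: ifP => lt_dt; rewrite leqNgt lt_dt //=.
have lt_m : (j + s) %% k %/ t < m by rewrite (leq_trans _ hdm) // ltn_divLR.
by rewrite insubT.
Qed.

Lemma card_cyclic_assign_fibre s i : #|[set j | cyclic_assign s j == Some i]| <= t.
Proof.
pose rem_t (j : 'I_k) : 'I_t := Ordinal (ltn_pmod ((j + s) %% k) ht).
rewrite -[t]card_ord; apply: (@leq_card_in _ _ rem_t) => j1 j2.
rewrite !inE => /eqP/cyclic_assign_SomeP[e1 _] /eqP/cyclic_assign_SomeP[e2 _] [e].
have : (j1 + s) %% k = (j2 + s) %% k by rewrite (divn_eq ((j1 + s) %% k) t) -e1 e2 e -divn_eq.
by move/eqP; rewrite eqn_modDr !modn_small // => /eqP/val_inj.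
Qed.

End CyclicAssignment.

Lemma card_shifts_mod_ge k a (j : 'I_k) : (a <= k)%N ->
  (\sum_(s < k) (a <= (j + s) %% k)%N = k - a)%N.
Proof.
move=> ak; have k_gt0 : (0 < k)%N by case: j => /= j; lia.
pose h (s : 'I_k) : 'I_k := Ordinal (ltn_pmod (j + s) k_gt0).
have h_inj : injective h.
  by move=> s1 s2 /(congr1 val)/eqP; rewrite /= eqn_modDl !modn_small // => /eqP/val_inj.
transitivity (\sum_(u < k) (a <= u))%N; first by rewrite [RHS](reindex_inj h_inj).
rewrite -(big_mkord predT (fun u => nat_of_bool (a <= u)%N)).
rewrite (@big_cat_nat _ _ _ a) //= big1_seq ?add0n => [|u /andP[_]]; last first.
  by rewrite mem_index_iota => /andP[_]; rewrite ltnNge => /negbTE ->.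
rewrite big_nat_cond (eq_bigr (fun _ => 1%N)) => [|u /andP[/andP[-> _] _]] //.
by rewrite -big_nat_cond sum_nat_const_nat muln1.
Qed.

Lemma hss_download_nat_bound (F : finFieldType) t k d m l (P : linHSS F k m l) :
  (0 < t)%N -> (0 < k)%N -> (0 < d)%N -> (0 < l)%N -> (d <= m)%N ->
  hss_correct P d -> hss_private P t ->
  (d * t < k)%N /\ (k * l <= (k - d * t) * \sum_(j < k) outb P j)%N.
Proof.
move=> ht hk hd hl hdm Hcor Hpriv.
have bound s : (l <= \sum_(j | cyclic_assign m t d s j == None) outb P j)%N.
  apply: hss_unassigned_outb_ge hd hdm hl Hcor Hpriv _ _ => [j i|i].
    exact: cyclic_assign_lt.
  exact: card_cyclic_assign_fibre.
have lt_dt_k : (d * t < k)%N.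
  rewrite ltnNge; apply/negP => le_k_dt; have := bound (Ordinal hk).
  rewrite big1 ?leqn0 ?(gtn_eqF hl) // => j.
  by rewrite cyclic_assign_None // leqNgt (leq_trans _ le_k_dt) ?ltn_pmod.
split=> //; have -> : (k * l = \sum_(s < k) l)%N by rewrite sum_nat_const card_ord.
apply: leq_trans; first by apply: leq_sum => s _; exact: bound.
under eq_bigr do rewrite big_mkcond /=.
rewrite exchange_big big_distrr /=; apply: leq_sum => j _.
rewrite -(card_shifts_mod_ge j (ltnW lt_dt_k)) big_distrl /=.
by apply: leq_sum => s _; rewrite cyclic_assign_None //; case: ifP; rewrite ?mul1n.
Qed.

Lemma log2_card_gt0 (R : realType) (F : finFieldType) : 0 < log2 (#|F|%:R : R).
Proof. by rewrite /log2 divr_gt0 ?ln_gt0 ?ltr1n ?card_finNzRing_gt1. Qed.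

Lemma cost_rate_bounds (R : realType) (L : R) (k l a N : nat) :
  0 < L -> (0 < k)%N -> (0 < l)%N -> (a < k)%N -> (k * l <= (k - a) * N)%N ->
  (k * l)%:R * L / (k - a)%:R <= N%:R * L /\ l%:R * L / (N%:R * L) <= 1 - a%:R / k%:R.
Proof.
move=> L_gt0 k_gt0 l_gt0 lt_ak klN.
have N_gt0 : (0 < N)%N.
  by rewrite lt0n; apply: contraTneq klN => ->; rewrite muln0 -ltnNge muln_gt0 k_gt0.
have ka_gt0 : 0 < (k - a)%N%:R :> R by rewrite ltr0n subn_gt0.
split.
  by rewrite ler_pdivrMr // mulrAC ler_pM2r // -natrM ler_nat [(N * _)%N]mulnC.
have -> : l%:R * L / (N%:R * L) = l%:R / N%:R.
  by field; rewrite !lt0r_neq0 ?ltr0n.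
have -> : 1 - a%:R / k%:R = (k - a)%N%:R / k%:R :> R.
  by rewrite natrB ?(ltnW lt_ak) //; field; rewrite lt0r_neq0 ?ltr0n.
by rewrite ler_pdivrMr ?ltr0n // mulrAC ler_pdivlMr ?ltr0n // -!natrM ler_nat mulnC.
Qed.

Theorem mainTheorem9 (R : realType) (F : finFieldType) (t k d m l : nat)
  (ht : (0 < t)%N) (hk : (0 < k)%N) (hd : (0 < d)%N) (hm : (0 < m)%N)
  (hl : (0 < l)%N) (hmd : (d <= m)%N)
  (P : linHSS F k m l) (Hcor : hss_correct P d) (Hpriv : hss_private P t) :
  [/\ (d * t < k)%N,
      download_cost R P >= (k * l)%N%:R * log2 (#|F|%:R : R) / (k - d * t)%N%:R
    & download_rate R P <= 1 - (d * t)%N%:R / k%:R].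
Proof.
have [lt_dt_k klN] := hss_download_nat_bound ht hk hd hl hmd Hcor Hpriv.
have [cost_ge rate_le] := cost_rate_bounds (log2_card_gt0 R F) hk hl lt_dt_k klN.
by split.
Qed.
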